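(* Let scalar functions $S_n(t),\bar S_n(t),v_n(t)$ ($n\in\mathbb{Z}$) satisfy \begin{align*} \mathrm{i}\,S_{n,t}&=v_n(S_{n+1}+S_{n-1})-cS_n,\qquad \mathrm{i}\,\bar S_{n,t}=-v_n(\bar S_{n+1}+\bar S_{n-1})+c\bar S_n,\\ v_{n,t}&=\tfrac12 v_n\,\Delta_n^+\big(S_n\bar S_{n-1}+S_{n-1}\bar S_n\big), \end{align*} with $c$ constant. Then \begin{align*} &\Big\{v_n(S_{n+1}+S_{n-1})(\bar S_{n+1}+\bar S_{n-1})+\tfrac{\mathrm{i}}{4}\big[(S_{n+1}\bar S_n)^2-(S_n\bar S_{n+1})^2\big]\Big\}_t\\ &=\Delta_n^+\Big\{-\mathrm{i}\,v_nv_{n-1}\big[(S_{n+1}+S_{n-1})(\bar S_n+\bar S_{n-2})-(S_n+S_{n-2})(\bar S_{n+1}+\bar S_{n-1})\big]\\ &\qquad+\tfrac12 v_n\big[S_{n-1}\bar S_{n-1}(S_n\bar S_{n-1}+S_{n-1}\bar S_n)+S_{n+1}\bar S_{n-1}S_n\bar S_{n-1}+S_{n-1}\bar S_{n+1}S_{n-1}\bar S_n\big]\Big\}. \end{align*}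
   Context: $\Delta_n^+f_n:=f_{n+1}-f_n$; $\bar S_n$ is an independent variable (not necessarily the complex conjugate of $S_n$). *)

From Stdlib Require Import Reals ZArith.
Open Scope R_scope.

Definition Cx : Type := (R * R)%type.
Definition Cre (z : Cx) : R := fst z.
Definition Cim (z : Cx) : R := snd z.
Definition RtoC (x : R) : Cx := (x, 0).
Definition Ci : Cx := (0, 1).
Definition Cadd (a b : Cx) : Cx := (fst a + fst b, snd a + snd b).
Definition Copp (a : Cx) : Cx := (- fst a, - snd a).
Definition Csub (a b : Cx) : Cx := Cadd a (Copp b).
Definition Cmul (a b : Cx) : Cx :=
  (fst a * fst b - snd a * snd b, fst a * snd b + snd a * fst b).

Declare Scope C_scope.
Delimit Scope C_scope with C.
Infix "+" := Cadd : C_scope.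
Infix "-" := Csub : C_scope.
Infix "*" := Cmul : C_scope.
Notation "- a" := (Copp a) : C_scope.

Definition is_derivC (f : R -> Cx) (t : R) (d : Cx) : Prop :=
  derivable_pt_lim (fun s => fst (f s)) t (fst d) /\
  derivable_pt_lim (fun s => snd (f s)) t (snd d).

(* Differentiating F by the product rule and replacing every time derivative
   by the equations of motion (i S_t = ... gives S_t = -i (...)), the claim
   becomes a polynomial identity in the lattice values, with i^2 = -1.  The
   terms carrying c cancel because each monomial of F contains as many factors
   S as factors Sb, and the equations give them opposite phases i c and -i c. *)
From Stdlib Require Import Reals ZArith.
Open Scope R_scope.

Lemma Cx_ring_theory :
  ring_theory (RtoC 0) (RtoC 1) Cadd Cmul Csub Copp (@eq Cx).
Proof.
  constructor; intros;
    repeat match goal with p : Cx |- _ => destruct p end;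
    unfold Csub, Cadd, Cmul, Copp, RtoC; simpl; f_equal; ring.
Qed.

Add Ring Cx_ring : Cx_ring_theory.

Lemma Ci_mul_Ci : (Ci * Ci)%C = (- RtoC 1)%C.
Proof. unfold Cmul, Ci, Copp, RtoC; simpl; f_equal; ring. Qed.

Lemma Ci_mul_eqE (d X : Cx) : (Ci * d)%C = X -> d = (- (Ci * X))%C.
Proof. intros <-. ring [Ci_mul_Ci]. Qed.

Lemma RtoC_plus (x y : R) : RtoC (x + y) = (RtoC x + RtoC y)%C.
Proof. unfold Cadd, RtoC; simpl; f_equal; ring. Qed.

Lemma is_derivC_eq_compat (f : R -> Cx) (t : R) (a b : Cx) :
  is_derivC f t a -> a = b -> is_derivC f t b.
Proof. now intros H <-. Qed.

Lemma is_derivC_const (z : Cx) (t : R) : is_derivC (fun _ => z) t (RtoC 0).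
Proof. split; apply derivable_pt_lim_const. Qed.

Lemma is_derivC_plus (f g : R -> Cx) (t : R) (a b : Cx) :
  is_derivC f t a -> is_derivC g t b ->
  is_derivC (fun s => (f s + g s)%C) t (a + b)%C.
Proof.
  intros [Hf1 Hf2] [Hg1 Hg2]; split.
  - exact (derivable_pt_lim_plus _ _ _ _ _ Hf1 Hg1).
  - exact (derivable_pt_lim_plus _ _ _ _ _ Hf2 Hg2).
Qed.

Lemma is_derivC_opp (f : R -> Cx) (t : R) (a : Cx) :
  is_derivC f t a -> is_derivC (fun s => (- f s)%C) t (- a)%C.
Proof.
  intros [Hf1 Hf2]; split.
  - exact (derivable_pt_lim_opp _ _ _ Hf1).
  - exact (derivable_pt_lim_opp _ _ _ Hf2).
Qed.

Lemma is_derivC_minus (f g : R -> Cx) (t : R) (a b : Cx) :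
  is_derivC f t a -> is_derivC g t b ->
  is_derivC (fun s => (f s - g s)%C) t (a - b)%C.
Proof. intros Hf Hg; apply is_derivC_plus; [exact Hf | now apply is_derivC_opp]. Qed.

Lemma is_derivC_mult (f g : R -> Cx) (t : R) (a b : Cx) :
  is_derivC f t a -> is_derivC g t b ->
  is_derivC (fun s => (f s * g s)%C) t (a * g t + f t * b)%C.
Proof.
  intros [Hf1 Hf2] [Hg1 Hg2]; split; simpl.
  - replace (fst a * fst (g t) - snd a * snd (g t) + (fst (f t) * fst b - snd (f t) * snd b))
      with (fst a * fst (g t) + fst (f t) * fst b - (snd a * snd (g t) + snd (f t) * snd b))
      by ring.
    apply derivable_pt_lim_minus; apply derivable_pt_lim_mult; assumption.
  - replace (fst a * snd (g t) + snd a * fst (g t) + (fst (f t) * snd b + snd (f t) * fst b))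
      with (fst a * snd (g t) + fst (f t) * snd b + (snd a * fst (g t) + snd (f t) * fst b))
      by ring.
    apply derivable_pt_lim_plus; apply derivable_pt_lim_mult; assumption.
Qed.

Theorem mainTheorem7
  (S Sb v : Z -> R -> Cx) (dS dSb dv : Z -> R -> Cx) (c : Cx)
  (hS : forall n t, is_derivC (S n) t (dS n t))
  (hSb : forall n t, is_derivC (Sb n) t (dSb n t))
  (hv : forall n t, is_derivC (v n) t (dv n t))
  (eS : forall n t, (Ci * dS n t = v n t * (S (n+1)%Z t + S (n-1)%Z t) - c * S n t)%C)
  (eSb : forall n t, (Ci * dSb n t = - (v n t * (Sb (n+1)%Z t + Sb (n-1)%Z t)) + c * Sb n t)%C)
  (ev : forall n t, dv n t =
     (RtoC (1/2) * v n t *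
       ((S (n+1)%Z t * Sb n t + S n t * Sb (n+1)%Z t)
        - (S n t * Sb (n-1)%Z t + S (n-1)%Z t * Sb n t)))%C) :
  let F := fun (n : Z) (t : R) =>
    (v n t * (S (n+1)%Z t + S (n-1)%Z t) * (Sb (n+1)%Z t + Sb (n-1)%Z t)
     + (Ci * RtoC (1/4)) *
       ((S (n+1)%Z t * Sb n t) * (S (n+1)%Z t * Sb n t)
        - (S n t * Sb (n+1)%Z t) * (S n t * Sb (n+1)%Z t)))%C in
  let G := fun (n : Z) (t : R) =>
    (- (Ci * v n t * v (n-1)%Z t *
         ((S (n+1)%Z t + S (n-1)%Z t) * (Sb n t + Sb (n-2)%Z t)
          - (S n t + S (n-2)%Z t) * (Sb (n+1)%Z t + Sb (n-1)%Z t)))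
     + RtoC (1/2) * v n t *
       (S (n-1)%Z t * Sb (n-1)%Z t * (S n t * Sb (n-1)%Z t + S (n-1)%Z t * Sb n t)
        + S (n+1)%Z t * Sb (n-1)%Z t * S n t * Sb (n-1)%Z t
        + S (n-1)%Z t * Sb (n+1)%Z t * S (n-1)%Z t * Sb n t))%C in
  forall (n : Z) (t : R), is_derivC (F n) t (G (n+1)%Z t - G n t)%C.
Proof.
  intros F G n t.
  pose proof (fun m s => Ci_mul_eqE _ _ (eS m s)) as dSE.
  pose proof (fun m s => Ci_mul_eqE _ _ (eSb m s)) as dSbE.
  eapply is_derivC_eq_compat.
  { repeat first [ apply hS | apply hSb | apply hv | apply is_derivC_const
                 | apply is_derivC_mult | apply is_derivC_plus
                 | apply is_derivC_minus | apply is_derivC_opp ]. }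
  unfold G; rewrite !dSE, !dSbE, !ev.
  replace (n + 1 - 1)%Z with n by ring.
  replace (n - 1 + 1)%Z with n by ring.
  replace (n + 1 - 2)%Z with (n - 1)%Z by ring.
  replace (n - 1 - 1)%Z with (n - 2)%Z by ring.
  replace (n + 1 + 1 - 1)%Z with (n + 1)%Z by ring.
  replace (1 / 2) with (1 / 4 + 1 / 4) by field.
  rewrite RtoC_plus.
  ring [Ci_mul_Ci].
Qed.
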